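(* Let $q$ be a query program, $P$ a partial model and $\mathcal{T}$ a theory. For a concrete model $M$ let $\mathit{DS}_M(M)=\max_{k\vDash\mathcal{S}_{\mathrm{IPET}}\cup\mathcal{S}_{\mathrm{flow}}(M)}g_{\mathrm{IPET}}(k)$, let $\mathit{DS}_P=\max_{M\in\mathit{solutions}(P',\mathcal{T}')}g_{\mathrm{witness}}(M)$, and let $M^{*}$ (the witness model) be an optimal solution of $\mathit{DS}_P$, i.e. $M^*\in\mathit{solutions}(P',\mathcal{T}')$ with $g_{\mathrm{witness}}(M^* )=\mathit{DS}_P$. Then $M^{*}\in\mathit{solutions}(P,\mathcal{T})$ and $\mathit{DS}_M(M)\le\mathit{DS}_M(M^{*})=\mathit{DS}_P$ for all $M\in\mathit{solutions}(P,\mathcal{T})$.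
   Context: Linear systems. Fix a large finite reserve $\mathcal{X}$ of integer variables. A system of linear inequalities $\mathcal{S}$ is a finite set of inequalities $\sum_j a_{ij}x_j\le y_i$ (equations are written as pairs of inequalities). A valuation $k:\mathcal{X}\to\mathbb{Z}$ is a solution of $\mathcal{S}$ ($k\vDash\mathcal{S}$) if it satisfies all of them; $\mathcal{S}_1\vDash\mathcal{S}_2$ means every solution of $\mathcal{S}_1$ is a solution of $\mathcal{S}_2$. Models. A metamodel is a signature $\Sigma$ of unary class symbols, binary relation symbols, a unary existence symbol $\varepsilon$ and a binary equality symbol $\sim$. A (scoped) partial model $P=\langle O_P,I_P,\mathcal{S}_P\rangle$ consists of a finite object set $O_P$, a 3-valued interpretation $I_P(\sigma):O_P^{\mathrm{arity}(\sigma)}\to\{0,1,\tfrac12\}$ for each $\sigma\in\Sigma$ ($\tfrac12$ = unknown), and a scope $\mathcal{S}_P$ (a system of linear inequalities). $P$ is concrete if all values are $0$ or $1$, $I_P(\varepsilon)(o)=1$ for all $o$, $I_P(\sim)(o_1,o_2)=1$ iff $o_1=o_2$, and $\mathcal{S}_P$ has a solution. Refinement: for $\mathit{abs}:O_Q\to O_P$, $P\succcurlyeq_{\mathit{abs}}Q$ holds if for all $\sigma$ and tuples $\bar q$, $I_P(\sigma)(\mathit{abs}(\bar q))$ is $\tfrac12$ or equals $I_Q(\sigma)(\bar q)$; every $p$ with $I_P(\varepsilon)(p)=1$ has a preimage under $\mathit{abs}$; and $\mathcal{S}_Q\vDash\mathcal{S}_P$. $P\succcurlyeq Q$ if $P\succcurlyeq_{\mathit{abs}}Q$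 for some $\mathit{abs}$. For a first-order predicate $\varphi$ over $\Sigma$ with free variables $v_1,\dots,v_n$ and a concrete model $M$, $M\#\varphi$ is the number of maps $Z:\{v_1,\dots,v_n\}\to O_M$ under which $\varphi$ is true in $M$. A theory $\mathcal{T}=\langle\Phi,r\rangle$ is a finite set $\Phi$ of predicates with a map $r:\Phi\to\mathcal{X}$; a concrete $M$ is compatible with it ($M\vDash\mathcal{T}$) if $\mathcal{S}_M\vDash r(\varphi)=M\#\varphi$ for all $\varphi\in\Phi$. $\mathit{solutions}(P,\mathcal{T})$ is the set of concrete models $M$ with $P\succcurlyeq M$ and $M\vDash\mathcal{T}$. Program and IPET. $q$ is a query program generated from a graph-query search plan: structured code of nested for-loops and if-statements, where each for-loop implements an extend constraint ($C(v)$ with $v$ new, or $R(v_i,v_j)$ with $v_j$ new; it iterates over all candidate bindings of the new variable) and each if-statement implements a check constraint ($C(v_i)$, $R(v_i,v_j)$, $v_i=v_j$, or their negations, over bound variables). $\mathit{BB}$ is its set of basic blocks; its weighted CFG is $\langle V,E,s,t,w,\mathit{tr}\rangle$ with edges $E\subseteq V\times V$, start/end $s,t$, weights $w:E\to\mathbb{N}$, traceability $\mathit{tr}:V\to\mathit{BB}$. $f:E\to\mathcal{X}$ assigns distinct variables to edges. $\mathcal{S}_{\mathrm{IPET}}$ contains $\sum_{e=\langle s,n\rangle}f(e)=1$, $\sum_{e=\langle n,t\rangle}f(e)=1$, flow conservation at every $n\ne s,t$, $-f(e)\le0$, and possibly further low-level flow facts. $g_{\mathrm{IPET}}(k)=\sum_{e\in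 E}w(e)k(f(e))$. Standing assumption (IPET safety): for every execution of $q$ along CFG path $\pi$, the valuation $k_\pi(f(e))=\pi\#e$ satisfies $\mathcal{S}_{\mathrm{IPET}}$ and the execution time is at most $g_{\mathrm{IPET}}(k_\pi)$. Basic block predicates. For $bb\in\mathit{BB}$, $\psi_{bb}$ is the conjunction of the atomic predicates of all for/if statements enclosing $bb$ (extend atoms without their existential quantifier; check literals as-is); $\psi_{bb}=\mathrm{true}$ if none. If $bb$ is the header of loop $\ell$, also $\psi'_{bb}=\psi_{bb}\wedge(\text{atom of }\ell)$. $\Psi$ is the set of all these predicates. By the structure of the generated code, in the run of $q$ on a concrete $M$, executions of a non-header $bb$ correspond one-to-one to matches of $\psi_{bb}$, and executions of a loop header $bb$ to matches of $\psi_{bb}$ plus matches of $\psi'_{bb}$. For concrete $M$, $\mathcal{S}_{\mathrm{flow}}(M)$ contains for each $bb$: $\sum_{e=\langle n_1,n_2\rangle\in E,\mathit{tr}(n_1)=bb}f(e)=M\#\psi_{bb}+M\#\psi'_{bb}$ (loop header) or $=M\#\psi_{bb}$ (otherwise). Witness generation. Given $P=\langle O_P,I_P,\mathcal{S}_P\rangle$ and $\mathcal{T}=\langle\Phi,r\rangle$ (with the range of $f$ disjoint from the range of $r$ and from the variables of $\mathcal{S}_P$), extend $r$ to $r'$ on $\Phi\cup\Psi$ by assigning to each $\psi\in\Psi$ a fresh distinct variable (not in the range of $f$, of $r$, or in $\mathcal{S}_P$). $\mathcal{S}_{\mathrm{merge}}$ contains for each $bb$: $r'(\psi_{bb})+r'(\psi'_{bb})-\sum_{e=\langle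 n_1,n_2\rangle\in E,\mathit{tr}(n_1)=bb}f(e)=0$ if $bb$ is a loop header, else $r'(\psi_{bb})-\sum_{e=\langle n_1,n_2\rangle\in E,\mathit{tr}(n_1)=bb}f(e)=0$. Set $P'=\langle O_P,I_P,\mathcal{S}_P\cup\mathcal{S}_{\mathrm{IPET}}\cup\mathcal{S}_{\mathrm{merge}}\rangle$ and $\mathcal{T}'=\langle\Phi\cup\Psi,r'\rangle$. For a concrete $M$, $g_{\mathrm{witness}}(M)=\max_{k\vDash\mathcal{S}_M}g_{\mathrm{IPET}}(k)$. *)

From HB Require Import structures.
From mathcomp Require Import all_boot all_order all_algebra.
Set Implicit Arguments. Unset Strict Implicit. Unset Printing Implicit Defensive.
Import Order.TTheory GRing.Theory Num.Theory.
Local Open Scope ring_scope.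

Definition var := nat.
Definition valuation := var -> int.

Record ineq := Ineq { coeffs : seq (var * int); bound : int }.
Definition system := seq ineq.

Definition eval_lin (k : valuation) (cs : seq (var * int)) : int :=
  \sum_(p <- cs) p.2 * k p.1.
Definition sat_ineq (k : valuation) (i : ineq) : bool :=
  eval_lin k (coeffs i) <= bound i.
Definition solves (S : system) (k : valuation) : bool := all (sat_ineq k) S.
Definition entails (S1 S2 : system) : Prop :=
  forall k, solves S1 k -> solves S2 k.
Definition vars_of (S : system) : seq var :=
  flatten [seq [seq p.1 | p <- coeffs i] | i <- S].
Definition eqn (cs : seq (var * int)) (c : int) : system :=
  [:: Ineq cs c; Ineq [seq (p.1, - p.2) | p <- cs] (- c)].
Definition is_max (S : system) (g : valuation -> int) (v : int) : Prop :=
  (exists k, solves S k /\ g k = v) /\ (forall k, solves S k -> g k <= v).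

(* C: class symbols, R: relation symbols; epsilon and ~ are built in.        *)
(* propositional list membership (for element types without decidable equality) *)
Fixpoint In_seq (T : Type) (x : T) (s : seq T) : Prop :=
  if s is y :: s' then y = x \/ In_seq x s' else False.

Inductive tv := F0 | F1 | Fu.   (* 0, 1, 1/2 *)

Record pmodel (C R : Type) := PModel {
  obj : finType;
  icls : C -> obj -> tv;
  irel : R -> obj -> obj -> tv;
  iex : obj -> tv;
  ieq : obj -> obj -> tv;
  scope : system }.
Arguments icls [C R] p _ _.
Arguments irel [C R] p _ _ _.
Arguments iex [C R] p _.
Arguments ieq [C R] p _ _.

Section Models.
Variables C R : Type.

Definition concrete (M : pmodel C R) : Prop :=
  [/\ (forall c o, icls M c o <> Fu),
      (forall r o1 o2, irel M r o1 o2 <> Fu),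
      (forall o, iex M o = F1),
      (forall o1 o2, ieq M o1 o2 <> Fu /\ (ieq M o1 o2 = F1 <-> o1 = o2))
    & exists k, solves (scope M) k].

Definition info_le (x y : tv) : Prop := x = Fu \/ x = y.

Definition refines_by (P Q : pmodel C R) (abs : obj Q -> obj P) : Prop :=
  [/\ (forall c q, info_le (icls P c (abs q)) (icls Q c q)),
      (forall r q1 q2, info_le (irel P r (abs q1) (abs q2)) (irel Q r q1 q2)),
      (forall q, info_le (iex P (abs q)) (iex Q q))
      /\ (forall q1 q2, info_le (ieq P (abs q1) (abs q2)) (ieq Q q1 q2)),
      (forall p, iex P p = F1 -> exists q, abs q = p)
    & entails (scope Q) (scope P)].

Definition refines (P Q : pmodel C R) : Prop := exists abs, @refines_by P Q abs.

Inductive formula :=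
  | FCls of C & nat
  | FRel of R & nat & nat
  | FExist of nat
  | FEq of nat & nat
  | FTrue
  | FNot of formula
  | FAnd of formula & formula
  | FOr of formula & formula
  | FExists of nat & formula.

Fixpoint fv_raw (phi : formula) : seq nat :=
  match phi with
  | FCls _ x => [:: x]
  | FRel _ x y => [:: x; y]
  | FExist x => [:: x]
  | FEq x y => [:: x; y]
  | FTrue => [::]
  | FNot p => fv_raw p
  | FAnd p q => fv_raw p ++ fv_raw q
  | FOr p q => fv_raw p ++ fv_raw q
  | FExists x p => [seq y <- fv_raw p | y != x]
  end.
Definition fv (phi : formula) : seq nat := undup (fv_raw phi).

Definition is1 (x : tv) : bool := if x is F1 then true else false.

Fixpoint holds (M : pmodel C R) (env : nat -> option (obj M)) (phi : formula)
  : bool :=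
  match phi with
  | FCls c x => if env x is Some o then is1 (icls M c o) else false
  | FRel r x y =>
      if env x is Some o1 then if env y is Some o2 then is1 (irel M r o1 o2)
      else false else false
  | FExist x => if env x is Some o then is1 (iex M o) else false
  | FEq x y =>
      if env x is Some o1 then if env y is Some o2 then is1 (ieq M o1 o2)
      else false else false
  | FTrue => true
  | FNot p => ~~ holds env p
  | FAnd p q => holds env p && holds env q
  | FOr p q => holds env p || holds env q
  | FExists x p =>
      [exists o : obj M, holds (fun y => if y == x then Some o else env y) p]
  end.

(* M # phi : number of maps Z : fv phi -> O_M making phi true.  Such a map is
   represented by the tuple of its values on the (duplicate-free) list fv phi. *)
Definition nmatch (M : pmodel C R) (phi : formula) : nat :=
  #|[pred t : (size (fv phi)).-tuple (obj M) |
       holds (fun y => onth t (index y (fv phi))) phi]|.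

(* theories: finite list of pairs (phi, r(phi)) *)
Definition theory := seq (formula * var).

Definition compat (M : pmodel C R) (T : theory) : Prop :=
  forall p, In_seq p T -> entails (scope M) (eqn [:: (p.2, 1)] (nmatch M p.1)%:Z).

Definition solutions (P : pmodel C R) (T : theory) (M : pmodel C R) : Prop :=
  [/\ concrete M, refines P M & compat M T].

Variable BB : eqType.

Inductive ext_atom :=
  | ExtCls of C & nat
  | ExtRel of R & nat & nat.
Inductive chk_atom :=
  | ChkCls of C & nat
  | ChkRel of R & nat & nat
  | ChkEq of nat & nat.

Inductive stmt :=
  | SBlock of BB
  | SFor of ext_atom & BB & seq stmt             (* loop: atom, header, body *)
  | SIf of bool & chk_atom & seq stmt.           (* check literal (bool = positive) *)

Definition prog := seq stmt.

Definition ext_formula (a : ext_atom) : formula :=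
  match a with ExtCls c v => FCls c v | ExtRel r x y => FRel r x y end.
Definition chk_formula (pos : bool) (a : chk_atom) : formula :=
  let f := match a with
           | ChkCls c v => FCls c v | ChkRel r x y => FRel r x y
           | ChkEq x y => FEq x y end in
  if pos then f else FNot f.

Fixpoint conj (l : seq formula) : formula :=
  match l with
  | [::] => FTrue
  | [:: a] => a
  | a :: l' => FAnd a (conj l')
  end.

Fixpoint wf_stmt (bound : seq nat) (s : stmt) : bool :=
  match s with
  | SBlock _ => true
  | SFor (ExtCls _ v) _ body => (v \notin bound) && all (wf_stmt (v :: bound)) body
  | SFor (ExtRel _ x y) _ body =>
      [&& x \in bound, y \notin bound & all (wf_stmt (y :: bound)) body]
  | SIf _ (ChkCls _ v) body => (v \in bound) && all (wf_stmt bound) body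
  | SIf _ (ChkRel _ x y) body =>
      [&& x \in bound, y \in bound & all (wf_stmt bound) body]
  | SIf _ (ChkEq x y) body =>
      [&& x \in bound, y \in bound & all (wf_stmt bound) body]
  end.

(* for every basic block: (label, atoms of enclosing statements (outermost
   first), Some atom-of-the-loop if the block is a loop header) *)
Fixpoint info_stmt (ctx : seq formula) (s : stmt)
  : seq (BB * seq formula * option formula) :=
  match s with
  | SBlock b => [:: (b, ctx, None)]
  | SFor a h body =>
      (h, ctx, Some (ext_formula a))
        :: flatten (map (info_stmt (rcons ctx (ext_formula a))) body)
  | SIf p a body => flatten (map (info_stmt (rcons ctx (chk_formula p a))) body)
  end.

Definition info (q : prog) := flatten (map (info_stmt [::]) q).
Definition bbs (q : prog) : seq BB := [seq x.1.1 | x <- info q].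

Definition query_program (q : prog) : Prop :=
  all (wf_stmt [::]) q /\ uniq (bbs q).

Definition psi_of (x : BB * seq formula * option formula) : formula := conj x.1.2.
Definition psi'_of (x : BB * seq formula * option formula) : option formula :=
  if x.2 is Some a then Some (conj (rcons x.1.2 a)) else None.

Definition Psi (q : prog) : seq formula :=
  flatten [seq psi_of x :: (if psi'_of x is Some p then [:: p] else [::])
          | x <- info q].

Variable V : finType.

Definition edge_sum (E : seq (V * V)) (f : V * V -> var) (a : int)
  (P : pred (V * V)) : seq (var * int) :=
  [seq (f e, a) | e <- E & P e].

Definition S_ipet (E : seq (V * V)) (s t : V) (f : V * V -> var)
  (extra : system) : system :=
  eqn (edge_sum E f 1 (fun e => e.1 == s)) 1
  ++ eqn (edge_sum E f 1 (fun e => e.2 == t)) 1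
  ++ flatten [seq eqn (edge_sum E f 1 (fun e => e.2 == n)
                       ++ edge_sum E f (-1) (fun e => e.1 == n)) 0
             | n <- enum V & (n != s) && (n != t)]
  ++ [seq Ineq [:: (f e, -1)] 0 | e <- E]
  ++ extra.

Definition g_ipet (E : seq (V * V)) (w : V * V -> nat) (f : V * V -> var)
  (k : valuation) : int :=
  \sum_(e <- E) (w e)%:Z * k (f e).

Definition out_bb (E : seq (V * V)) (f : V * V -> var) (tr : V -> BB) (a : int)
  (b : BB) : seq (var * int) :=
  edge_sum E f a (fun e => tr e.1 == b).

Definition S_flow (q : prog) (E : seq (V * V)) (f : V * V -> var) (tr : V -> BB)
  (M : pmodel C R) : system :=
  flatten [seq eqn (out_bb E f tr 1 x.1.1)
                   ((nmatch M (psi_of x))%:Z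
                    + (if psi'_of x is Some p then (nmatch M p)%:Z else 0))
          | x <- info q].

Definition S_merge (q : prog) (E : seq (V * V)) (f : V * V -> var) (tr : V -> BB)
  (rho : formula -> var) : system :=
  flatten [seq eqn ((rho (psi_of x), 1)
                    :: (if psi'_of x is Some p then [:: (rho p, 1)] else [::])
                    ++ out_bb E f tr (-1) x.1.1) 0
          | x <- info q].

Definition P_witness (P : pmodel C R) (extraS : system) : pmodel C R :=
  @PModel C R (obj P) (icls P) (irel P) (iex P) (ieq P)
    (scope P ++ extraS).

Definition T_witness (T : theory) (q : prog) (rho : formula -> var) : theory :=
  T ++ [seq (p, rho p) | p <- Psi q].

End Models.

From Pilot Require Import Defs.
From mathcomp Require Import all_boot all_order all_algebra.
From mathcomp Require Import zify.
Import Order.TTheory GRing.Theory Num.Theory.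
Local Open Scope ring_scope.
Set Implicit Arguments. Unset Strict Implicit.

(* A solution of the witness problem (P', T') carries the block counts M # psi
   as values of the fresh variables r'(psi), so S_merge of a solution k of its
   scope is exactly S_flow of the model: k itself solves S_IPET and S_flow(M).
   Conversely, given M in solutions(P, T) and a solution k of S_IPET and
   S_flow(M), the valuation that is k on edge variables, M # psi on r'(psi) and
   a solution of the scope of M elsewhere (well defined by freshness) solves
   the scope of P' together with the count equations of T'; so M, rescoped by
   these constraints, is a solution of (P', T'). As g_IPET only reads edge
   variables, both directions preserve its value, whence
   DS_M(M) <= DS_P = DS_M(M* ). *)

Lemma In_seq_cat (A : Type) (x : A) s1 s2 :
  In_seq x (s1 ++ s2) <-> In_seq x s1 \/ In_seq x s2.
Proof. by elim: s1 => [|y s1 IH] /=; [split; [right | case] | rewrite IH or_assoc]. Qed.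

Lemma In_seq_map (A B : Type) (g : A -> B) x s : In_seq x s -> In_seq (g x) (map g s).
Proof. by elim: s => //= y s IH [<- | /IH]; [left | right]. Qed.

Lemma In_seq_mapP (A B : Type) (g : A -> B) y s :
  In_seq y (map g s) -> exists2 x, In_seq x s & y = g x.
Proof.
by elim: s => //= x s IH [<- | /IH[z zs ->]]; [exists x; first left | exists z; first right].
Qed.

Lemma In_seq_mem (A : Type) (U : eqType) (g : A -> U) x s : In_seq x s -> g x \in map g s.
Proof. by elim: s => //= y s IH [<- | /IH]; rewrite inE ?eqxx // => ->; rewrite orbT. Qed.

Lemma In_seq_flatten (A B : Type) (G : A -> seq B) x y s :
  In_seq x s -> In_seq y (G x) -> In_seq y (flatten (map G s)).
Proof.
by elim: s => //= z s IH [<- yG | /IH yIH /yIH yfl]; apply In_seq_cat; [left | right].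
Qed.

Lemma eq_all_In (A : Type) (a1 a2 : pred A) s :
  (forall x, In_seq x s -> a1 x = a2 x) -> all a1 s = all a2 s.
Proof.
by elim: s => //= x s IH eqa; rewrite eqa ?IH //; [move=> y ys; apply: eqa; right | left].
Qed.

Lemma solves_cat S1 S2 k : solves (S1 ++ S2) k = solves S1 k && solves S2 k.
Proof. exact: all_cat. Qed.

Lemma solves_flatten (A : Type) (F : A -> system) s k :
  solves (flatten (map F s)) k = all (fun x => solves (F x) k) s.
Proof. by elim: s => //= x s IH; rewrite solves_cat IH. Qed.

Lemma eval_lin_nil k : eval_lin k [::] = 0.
Proof. exact: big_nil. Qed.

Lemma eval_lin_cons k v a cs : eval_lin k ((v, a) :: cs) = a * k v + eval_lin k cs.
Proof. exact: big_cons. Qed.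

Lemma eval_lin_cat k cs1 cs2 : eval_lin k (cs1 ++ cs2) = eval_lin k cs1 + eval_lin k cs2.
Proof. exact: big_cat. Qed.

Lemma eval_lin_opp k cs : eval_lin k [seq (p.1, - p.2) | p <- cs] = - eval_lin k cs.
Proof. by rewrite /eval_lin big_map -sumrN; apply: eq_bigr => p _; rewrite mulNr. Qed.

Lemma solves_eqn k cs c : solves (Defs.eqn cs c) k = (eval_lin k cs == c).
Proof. by rewrite /solves /= /sat_ineq /= eval_lin_opp lerN2 andbT eq_le. Qed.

Lemma solves_eqn1 k v c : solves (Defs.eqn [:: (v, 1)] c) k = (k v == c).
Proof. by rewrite solves_eqn eval_lin_cons eval_lin_nil mul1r addr0. Qed.

Lemma solves_eq_on S k1 k2 : {in vars_of S, k1 =1 k2} -> solves S k1 = solves S k2.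
Proof.
elim: S => //= i S IH eqk; rewrite /solves /= -!/(solves _ _) IH => [|v vS]; last first.
  by apply: eqk; rewrite /vars_of /= mem_cat vS orbT.
congr (_ && _); rewrite /sat_ineq /eval_lin; congr (_ <= _).
by apply: eq_big_seq => p pi; rewrite eqk // /vars_of /= mem_cat map_f.
Qed.

Lemma vars_of_cat S1 S2 : vars_of (S1 ++ S2) = vars_of S1 ++ vars_of S2.
Proof. by rewrite /vars_of map_cat flatten_cat. Qed.

Lemma vars_of_eqn cs c : vars_of (Defs.eqn cs c) =i [seq p.1 | p <- cs].
Proof. by move=> v; rewrite /vars_of /= cats0 -map_comp mem_cat orbb. Qed.

Lemma vars_of_flatten_sub (A : Type) (F : A -> system) s (X : seq var) :
  (forall x, {subset vars_of (F x) <= X}) -> {subset vars_of (flatten (map F s)) <= X}.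
Proof.
by move=> FX; elim: s => //= x s IH v; rewrite vars_of_cat mem_cat => /orP[/FX | /IH].
Qed.

Lemma subset_cat (T : eqType) (s1 s2 X : seq T) :
  {subset s1 <= X} -> {subset s2 <= X} -> {subset s1 ++ s2 <= X}.
Proof. by move=> s1X s2X x; rewrite mem_cat => /orP[/s1X | /s2X]. Qed.

Section EdgeVariables.
Variables (V : finType) (E : seq (V * V)) (f : V * V -> var).

Lemma eval_edge_sum k a P :
  eval_lin k (edge_sum E f a P) = a * eval_lin k (edge_sum E f 1 P).
Proof. by rewrite /eval_lin !big_map mulr_sumr; apply: eq_bigr => e _; rewrite mul1r. Qed.

Lemma edge_sum_vars a P : {subset [seq p.1 | p <- edge_sum E f a P] <= [seq f e | e <- E]}.
Proof. by rewrite -map_comp; apply/mem_subseq/map_subseq/filter_subseq. Qed.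

Lemma eqn_edge_sum_vars a P c :
  {subset vars_of (Defs.eqn (edge_sum E f a P) c) <= [seq f e | e <- E]}.
Proof. by move=> v; rewrite vars_of_eqn => /edge_sum_vars. Qed.

Lemma S_ipet_vars s t extra :
  {subset vars_of extra <= [seq f e | e <- E]} ->
  {subset vars_of (S_ipet E s t f extra) <= [seq f e | e <- E]}.
Proof.
move=> extraE; rewrite /S_ipet !vars_of_cat.
apply: subset_cat; first exact: eqn_edge_sum_vars.
apply: subset_cat; first exact: eqn_edge_sum_vars.
apply: subset_cat.
  apply: vars_of_flatten_sub => n v.
  by rewrite vars_of_eqn map_cat mem_cat => /orP[] /edge_sum_vars.
apply: subset_cat => //.
by rewrite /vars_of -map_comp flatten_map1.
Qed.

Lemma S_flow_vars (C R : Type) (BB : eqType) (q : prog C R BB) tr M :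
  {subset vars_of (S_flow q E f tr M) <= [seq f e | e <- E]}.
Proof. by apply: vars_of_flatten_sub => x; apply: eqn_edge_sum_vars. Qed.

Lemma g_ipet_eq_on w k1 k2 :
  {in [seq f e | e <- E], k1 =1 k2} -> g_ipet E w f k1 = g_ipet E w f k2.
Proof. by move=> eqk; apply: eq_big_seq => e eE; rewrite eqk // map_f. Qed.

End EdgeVariables.

Section Models.
Variables C R : Type.
Implicit Types (P M : pmodel C R) (T : theory C R).

Definition rescope M (S : system) : pmodel C R :=
  @PModel C R (obj M) (icls M) (irel M) (iex M) (ieq M) S.

Lemma holds_rescope M S (env : nat -> option (obj M)) phi :
  @holds C R (rescope M S) env phi = @holds C R M env phi.
Proof.
elim: phi env => //= [p IH | p IHp r IHr | p IHp r IHr | x p IH] env; rewrite ?IH ?IHp ?IHr //.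
by apply: eq_existsb => o; rewrite IH.
Qed.

Lemma nmatch_rescope M S phi : nmatch (rescope M S) phi = nmatch M phi.
Proof. by apply: eq_card => t; exact: holds_rescope. Qed.

Lemma concrete_rescope M S k : concrete M -> solves S k -> concrete (rescope M S).
Proof. by case=> *; split=> //; exists k. Qed.

Lemma refines_by_witness P M S abs :
  @refines_by C R (P_witness P S) M abs -> @refines_by C R P M abs.
Proof. by case=> ? ? ? ? entPS; split=> // k /entPS; rewrite solves_cat => /andP[]. Qed.

Lemma refines_by_witness_rescope P M S SM abs :
  @refines_by C R P M abs -> entails SM (scope P ++ S) ->
  @refines_by C R (P_witness P S) (rescope M SM) abs.
Proof. by case. Qed.

Definition theory_eqns M T : system :=
  flatten [seq Defs.eqn [:: (p.2, 1)] (nmatch M p.1)%:Z | p <- T].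

Lemma solves_theory_eqns M T k :
  solves (theory_eqns M T) k <-> forall p, In_seq p T -> k p.2 = (nmatch M p.1)%:Z.
Proof.
rewrite /theory_eqns; elim: T => [|p T IH]; first by split=> // _ p [].
rewrite solves_cat solves_eqn1; split.
  by case/andP=> /eqP kp /IH kT x [<- | /kT].
by move=> kT; rewrite kT ?eqxx /=; [apply/IH => x xT; apply: kT; right | left].
Qed.

Lemma compat_value M T p k :
  compat M T -> In_seq p T -> solves (scope M) k -> k p.2 = (nmatch M p.1)%:Z.
Proof. by move=> compMT pT /(compMT p pT); rewrite solves_eqn1 => /eqP. Qed.

Lemma compat_rescope_theory_eqns M S T : compat (rescope M (S ++ theory_eqns M T)) T.
Proof.
move=> p pT k; rewrite solves_cat => /andP[_ /solves_theory_eqns/(_ p pT) kp].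
by rewrite solves_eqn1 nmatch_rescope kp.
Qed.

Lemma compat_catl M T1 T2 : compat M (T1 ++ T2) -> compat M T1.
Proof. by move=> compM p pT; apply: compM; apply/In_seq_cat; left. Qed.

Lemma solutions_witness P S T1 T2 M :
  solutions (P_witness P S) (T1 ++ T2) M -> solutions P T1 M.
Proof.
case=> concM [abs refM] compM; split=> //.
  by exists abs; exact: refines_by_witness refM.
exact: compat_catl compM.
Qed.

Lemma solutions_witness_rescope P S T M k :
  concrete M -> refines P M -> solves ((scope P ++ S) ++ theory_eqns M T) k ->
  solutions (P_witness P S) T (rescope M ((scope P ++ S) ++ theory_eqns M T)).
Proof.
move=> concM [abs refM] ksol; split.
- exact: concrete_rescope ksol.
- by exists abs; apply: refines_by_witness_rescope refM _ => k'; rewrite solves_cat => /andP[].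
- exact: compat_rescope_theory_eqns.
Qed.

End Models.

Definition override (vs : seq var) (k1 k2 : valuation) : valuation :=
  fun v => if v \in vs then k1 v else k2 v.

Definition assign (A : Type) (rho : A -> var) (val : A -> int) (s : seq A)
  (k : valuation) : valuation :=
  foldr (fun a k' v => if v == rho a then val a else k' v) k s.

Lemma assign_In (A : Type) (rho : A -> var) val s k a :
  (forall a1 a2, In_seq a1 s -> In_seq a2 s -> rho a1 = rho a2 -> a1 = a2) ->
  In_seq a s -> assign rho val s k (rho a) = val a.
Proof.
elim: s => //= b s IH rho_inj ain; case: eqP => [rab | rab].
  by rewrite (rho_inj b a) //; left.
case: ain => [ba | ain]; first by rewrite ba in rab.
by apply: IH ain => a1 a2 a1s a2s; apply: rho_inj; right.
Qed.

Lemma assign_notin (A : Type) (rho : A -> var) val s k v :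
  (forall a, In_seq a s -> rho a <> v) -> assign rho val s k v = k v.
Proof.
elim: s => //= b s IH rho_v; case: eqP => [vb | _].
  by case: (rho_v b); [left | rewrite vb].
by apply: IH => a ain; apply: rho_v; right.
Qed.

Section Blocks.
Variables (C R : Type) (BB : eqType) (q : prog C R BB).

Lemma psi_in_Psi x : In_seq x (info q) -> In_seq (psi_of x) (Psi q).
Proof. by move=> xq; apply: (In_seq_flatten xq); left. Qed.

Lemma psi'_in_Psi x p : In_seq x (info q) -> psi'_of x = Some p -> In_seq p (Psi q).
Proof. by move=> xq xp; apply: (In_seq_flatten xq); rewrite /= xp; right; left. Qed.

Lemma In_T_witness T rho p : In_seq p (Psi q) -> In_seq (p, rho p) (T_witness T q rho).
Proof. by move=> pq; apply In_seq_cat; right; exact: (In_seq_map (fun p => (p, rho p))). Qed.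

Lemma solves_S_merge_flow (V : finType) E f (tr : V -> BB) rho M k :
  (forall p, In_seq p (Psi q) -> k (rho p) = (nmatch M p)%:Z) ->
  solves (S_merge q E f tr rho) k = solves (S_flow q E f tr M) k.
Proof.
move=> krho; rewrite /S_merge /S_flow !solves_flatten; apply: eq_all_In => x xq.
rewrite !solves_eqn eval_lin_cons eval_lin_cat /out_bb eval_edge_sum.
rewrite (krho _ (psi_in_Psi xq)).
case ex: (psi'_of x) => [p|];
  rewrite ?eval_lin_cons eval_lin_nil ?(krho p (psi'_in_Psi xq ex));
  by apply/idP/idP => /eqP flow; apply/eqP; lia.
Qed.

End Blocks.

Section WitnessGeneration.
Variables (C R : Type) (BB : eqType) (q : prog C R BB) (V : finType).
Variables (E : seq (V * V)) (s t : V) (w : V * V -> nat) (tr : V -> BB).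
Variables (f : V * V -> var) (extra : system).
Variables (P : pmodel C R) (T : theory C R) (rho : formula C R -> var).

Let SI := S_ipet E s t f extra.
Let P' := P_witness P (SI ++ S_merge q E f tr rho).
Let T' := T_witness T q rho.

Lemma witness_solves_flow M k :
  solutions P' T' M -> solves (scope M) k -> solves (SI ++ S_flow q E f tr M) k.
Proof.
case=> _ [_ [_ _ _ _ entP']] compM kM.
move: (entP' k kM); rewrite !solves_cat => /and3P[_ -> kmerge] /=.
rewrite -(solves_S_merge_flow E f tr (rho:=rho) (M:=M)) // => p pPsi.
exact: compat_value compM (In_T_witness T rho pPsi) kM.
Qed.

Hypothesis extra_on_edges : {subset vars_of extra <= [seq f e | e <- E]}.
Hypothesis edges_fresh : forall e, e \in E ->
  f e \notin vars_of (scope P) /\ f e \notin [seq p.2 | p <- T].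
Hypothesis rho_inj : forall p1 p2, In_seq p1 (Psi q) -> In_seq p2 (Psi q) ->
  rho p1 = rho p2 -> p1 = p2.
Hypothesis rho_fresh : forall p, In_seq p (Psi q) ->
  [/\ rho p \notin vars_of (scope P), rho p \notin [seq x.2 | x <- T]
    & forall e, e \in E -> rho p <> f e].

Definition lift_valuation M (k kM : valuation) : valuation :=
  override [seq f e | e <- E] k (assign rho (fun p => (nmatch M p)%:Z) (Psi q) kM).

Lemma lift_valuation_edge M k kM : {in [seq f e | e <- E], lift_valuation M k kM =1 k}.
Proof. by move=> v vE; rewrite /lift_valuation /override vE. Qed.

Lemma lift_valuation_rho M k kM p :
  In_seq p (Psi q) -> lift_valuation M k kM (rho p) = (nmatch M p)%:Z.
Proof.
move=> pPsi; rewrite /lift_valuation /override ifF ?assign_In //.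
by apply/negbTE/mapP => -[e eE]; case: (rho_fresh pPsi) => _ _ /(_ e eE).
Qed.

Lemma lift_valuation_scope M k kM v :
  v \in vars_of (scope P) ++ [seq x.2 | x <- T] -> lift_valuation M k kM v = kM v.
Proof.
move=> vPT; rewrite /lift_valuation /override ifF ?assign_notin //.
  move=> p pPsi rv; case: (rho_fresh pPsi); rewrite rv.
  by move: vPT; rewrite mem_cat => /orP[] ->.
apply/negbTE/mapP => -[e eE ve]; case: (edges_fresh eE); rewrite -ve.
by move: vPT; rewrite mem_cat => /orP[] ->.
Qed.

Lemma lift_valuation_solves M k kM :
  solutions P T M -> solves (scope M) kM -> solves (SI ++ S_flow q E f tr M) k ->
  solves (scope P' ++ theory_eqns M T') (lift_valuation M k kM).
Proof.
case=> _ [_ [_ _ _ _ entP]] compM kMsol; rewrite solves_cat => /andP[kSI kflow].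
have k'P : solves (scope P) (lift_valuation M k kM).
  rewrite (solves_eq_on (k2 := kM)) ?entP // => v vP.
  by apply: lift_valuation_scope; rewrite mem_cat vP.
have k'SI : solves SI (lift_valuation M k kM).
  rewrite (solves_eq_on (k2 := k)) // => v.
  by move/(S_ipet_vars extra_on_edges)/lift_valuation_edge.
have k'merge : solves (S_merge q E f tr rho) (lift_valuation M k kM).
  rewrite (solves_S_merge_flow E f tr (M := M) (lift_valuation_rho _ _ _)).
  by rewrite (solves_eq_on (k2 := k)) // => v /S_flow_vars /lift_valuation_edge.
have k'T' : solves (theory_eqns M T') (lift_valuation M k kM).
  apply/solves_theory_eqns => p /In_seq_cat[pT | ].
    rewrite lift_valuation_scope; first exact: compat_value compM pT kMsol.
    by rewrite mem_cat (In_seq_mem snd pT) orbT.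
  by case/(In_seq_mapP (g := fun p => (p, rho p))) => x xPsi ->; apply: lift_valuation_rho.
by rewrite solves_cat k'T' andbT solves_cat k'P solves_cat k'SI k'merge.
Qed.

Lemma flow_solution_lifts M k :
  solutions P T M -> solves (SI ++ S_flow q E f tr M) k ->
  exists2 M', solutions P' T' M' &
    exists2 k', solves (scope M') k' & g_ipet E w f k' = g_ipet E w f k.
Proof.
move=> MPT kflow; have [[_ _ _ _ [kM kMsol]] _ _] := MPT.
have k'sol := lift_valuation_solves MPT kMsol kflow.
exists (rescope M (scope P' ++ theory_eqns M T')).
  by apply: solutions_witness_rescope k'sol; case: MPT.
by exists (lift_valuation M k kM) => //; apply: g_ipet_eq_on; apply: lift_valuation_edge.
Qed.

End WitnessGeneration.

Unset Implicit Arguments. Set Strict Implicit.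

Theorem proposition5p5 (C R : Type) (BB : eqType) (q : prog C R BB)
  (V : finType) (E : seq (V * V)) (s t : V) (w : V * V -> nat)
  (tr : V -> BB) (f : V * V -> var) (extra : system)
  (P : pmodel C R) (T : theory C R) (rho : formula C R -> var)
  (Mstar : pmodel C R) (DSP : int) :
  (* q is a query program; its CFG is traceable to its basic blocks *)
  query_program q ->
  (forall n : V, tr n \in bbs q) ->
  uniq E ->
  (* the additional low-level flow facts of S_IPET constrain edge variables *)
  {subset vars_of extra <= [seq f e | e <- E]} ->
  (* f assigns distinct variables to edges, disjoint from r and S_P *)
  {in E &, injective f} ->
  (forall e, e \in E ->
     f e \notin vars_of (scope P) /\ f e \notin [seq p.2 | p <- T]) ->
  (* r' : fresh distinct variables for the predicates in Psi *)
  (forall p1 p2, In_seq p1 (Psi q) -> In_seq p2 (Psi q) ->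
     rho p1 = rho p2 -> p1 = p2) ->
  (forall p, In_seq p (Psi q) ->
     [/\ rho p \notin vars_of (scope P), rho p \notin [seq x.2 | x <- T]
       & forall e, e \in E -> rho p <> f e]) ->
  let SI := S_ipet E s t f extra in
  let P' := P_witness P (SI ++ S_merge q E f tr rho) in
  let T' := T_witness T q rho in
  (* M* is an optimal solution of DS_P (with value DSP) *)
  solutions P' T' Mstar ->
  is_max (scope Mstar) (g_ipet E w f) DSP ->
  (forall M, solutions P' T' M ->
     forall k, solves (scope M) k -> g_ipet E w f k <= DSP) ->
  (* conclusions *)
  [/\ solutions P T Mstar,
      (* DS_M(M* ) = DS_P *)
      is_max (SI ++ S_flow q E f tr Mstar) (g_ipet E w f) DSP
    & (* DS_M(M) <= DS_M(M* ) for all M in solutions(P,T) *)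
      forall M, solutions P T M ->
        forall k, solves (SI ++ S_flow q E f tr M) k -> g_ipet E w f k <= DSP].
Proof.
move=> _ _ _ extraE _ edgesF rhoI rhoF SI P' T' Mstar_sol [[k0 [k0sol <-]] _] DSP_max.
have flow_bound M : solutions P T M ->
    forall k, solves (SI ++ S_flow q E f tr M) k -> g_ipet E w f k <= g_ipet E w f k0.
  move=> MPT k /(flow_solution_lifts w extraE edgesF rhoI rhoF MPT)[M' M'sol [k' k'sol <-]].
  exact: DSP_max _ M'sol k' k'sol.
have Mstar_PT : solutions P T Mstar := solutions_witness Mstar_sol.
split=> //; split; last exact: flow_bound Mstar_PT.
by exists k0; split=> //; apply: witness_solves_flow Mstar_sol k0sol.
Qed.
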